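(* Let $G$ be a connected graph and $P$ an isometric path in $G$. If $P$ is bypath-free in $G$, then $P$ is $1$-leisurely-guardable.
   Context: A path $P$ in $G$ is isometric if $d_P(x,y)=d_G(x,y)$ for all $x,y\in V(P)$. For a subgraph $H$ of $G$ and an isometric path $P=v_1\cdots v_k$ in $H$, a bypath of $P$ in $H$ is a path $B=b_1\cdots b_t$ with $t\ge3$, $V(B)\subseteq V(H)$, $b_1=v_i$, $b_t=v_j$ for some $i<j$, $V(B)\cap V(P)=\{v_i,v_j\}$, and such that $v_1\cdots v_ib_2\cdots b_{t-1}v_j\cdots v_k$ is also an isometric path in $H$; $P$ is bypath-free in $H$ if $H$ contains no bypath of $P$. Cops and robber game on $G$: cops choose starting vertices, then the robber; then they alternate turns, each moving pieces to adjacent vertices or staying; capture occurs when a cop occupies the robber's vertex. An isometric (induced) subgraph $H$ is $k$-guardable if $k$ cops have a strategy such that after finitely many moves they are on vertices of $H$, stay in $H$ thereafter, and whenever the robber enters $H$ he is captured by one of them in the next turn. $H$ is $k$-leisurely-guardable if it is $k$-guardable via a $k$-guarding strategy with $k$ cops for which there is an integer $t$ such that in every sequence of $t$ consecutive moves there is a move in which at least one of these cops stays still. *)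

(* Finite simple graphs as a symmetric
   irreflexive relation e on a finType T. *)
From mathcomp Require Import all_boot.
Set Implicit Arguments.
Unset Strict Implicit.
Unset Printing Implicit Defensive.

Section Defs.
Variables (T : finType) (e : rel T).

(* A walk of length n from x is a sequence s of size n with [path e x s]. *)
Definition is_dist (x y : T) (n : nat) : Prop :=
  (exists s : seq T, [/\ size s = n, path e x s & last x s = y]) /\
  (forall s : seq T, path e x s -> last x s = y -> n <= size s).

Definition isometric_path (P : seq T) : Prop :=
  [/\ P != [::],
      (forall x0, path e (head x0 P) (behead P)), uniq P &
      forall x0 i j, i < size P -> j < size P ->
        is_dist (nth x0 P i) (nth x0 P j) (if i <= j then j - i else i - j)].

(* A bypath of P (in H = G): a path B = v_i b_2 ... b_{t-1} v_j with t >= 3,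
   i < j, interior q = b_2 ... b_{t-1} disjoint from V(P), such that
   v_1 ... v_i b_2 ... b_{t-1} v_j ... v_k is again an isometric path. *)
Definition is_bypath (P : seq T) (i j : nat) (vi vj : T) (q : seq T) : Prop :=
  [/\ i < j, onth P i = Some vi, onth P j = Some vj, q != [::] &
      [/\ uniq q, path e vi (rcons q vj), all (fun x => x \notin P) q &
          isometric_path (take i.+1 P ++ q ++ drop j P)]].

Definition bypath_free (P : seq T) : Prop :=
  ~ exists i j vi vj q, is_bypath P i j vi vj q.

(* A (deterministic, full-information) strategy for k cops: initial positions,
   and a move function from the history [(c_0,r_0); ...; (c_t,r_t)] to the
   new positions c_{t+1}.  Time convention: round 0 = cops place, then robber
   places (r_0); round t+1 = cops move to c_{t+1}, then robber moves to r_{t+1}.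
   Since cops play deterministically, quantifying over all robber position
   sequences r : nat -> T is the same as quantifying over robber strategies. *)
Record cop_strategy (k : nat) := CopStrategy {
  cs_init : {ffun 'I_k -> T};
  cs_move : seq ({ffun 'I_k -> T} * T) -> {ffun 'I_k -> T} }.

Variable k : nat.
Implicit Type s : cop_strategy k.

Fixpoint history s (r : nat -> T) (t : nat) : seq ({ffun 'I_k -> T} * T) :=
  match t with
  | 0 => [:: (cs_init s, r 0)]
  | t'.+1 => let h := history s r t' in rcons h (cs_move s h, r t)
  end.

Definition cop_pos s (r : nat -> T) (t : nat) : {ffun 'I_k -> T} :=
  (last (cs_init s, r 0) (history s r t)).1.

Definition robber_walk (r : nat -> T) : Prop :=
  forall t, r t.+1 = r t \/ e (r t) (r t.+1).

(* capture happens in round t: a cop moves onto the robber, or the robber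
   is on a cop's vertex after his own move *)
Definition caught s (r : nat -> T) (t : nat) : Prop :=
  exists i : 'I_k, cop_pos s r t i = r t \/ (0 < t /\ cop_pos s r t i = r t.-1).

Definition free s (r : nat -> T) (t : nat) : Prop :=
  forall u, u <= t -> ~ caught s r u.

Definition guarding_strategy (H : {set T}) s : Prop :=
  forall r, robber_walk r ->
    (forall t, free s r t -> forall i : 'I_k,
       cop_pos s r t.+1 i = cop_pos s r t i \/ e (cop_pos s r t i) (cop_pos s r t.+1 i)) /\
    exists N, forall t, N <= t -> free s r t ->
      (forall i : 'I_k, cop_pos s r t i \in H) /\
      (r t \in H -> exists i : 'I_k, cop_pos s r t.+1 i = r t).

Definition guardable (H : {set T}) : Prop :=
  exists s, guarding_strategy H s.

(* leisurely: in every tt consecutive cop moves (rounds t0+1 .. t0+tt, the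
   game still running), some cop stays still in some move *)
Definition leisurely_guardable (H : {set T}) : Prop :=
  exists s (tt : nat), guarding_strategy H s /\
    forall r, robber_walk r -> forall t0, free s r (t0 + tt) ->
      exists u, t0 <= u < t0 + tt /\
        exists i : 'I_k, cop_pos s r u.+1 i = cop_pos s r u i.

End Defs.

From mathcomp Require Import all_boot zify.
Set Implicit Arguments. Unset Strict Implicit. Unset Printing Implicit Defensive.

(* A vertex x casts on the path P = v_0 ... v_K the shadow interval
   [K - d(x,v_K), d(v_0,x)] of the indices j with d(v_0,v_j) <= d(v_0,x) and
   d(v_j,v_K) <= d(x,v_K).  A robber move shifts each end of his shadow by at
   most one and the cop steps along P towards it, so once inside the shadow the
   cop stays inside; a robber standing on v_j has shadow {j}.
   Bypath-freeness is used once: a vertex x off P with d(v_0,x) + d(x,v_K) = K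
   lies on a shortest v_0-v_K walk leaving P, and an excursion of that walk off
   P is a bypath.  Hence a one-point shadow means the robber is on P, and a cop
   that steps one way and then back has just caught him.  Before a capture the
   cop, confined to [0, K], must therefore pause within any K+1 consecutive
   rounds: this is leisureliness, and after the first pause the cop is inside
   the shadow. *)

Lemma last_take (T : Type) (x : T) s n :
  n <= size s -> last x (take n s) = nth x (x :: s) n.
Proof.
move=> ns; rewrite (last_nth x) size_takel //.
by rewrite -[x :: take n s]/(take n.+1 (x :: s)) nth_take.
Qed.

Lemma drop_path (T : Type) (e : rel T) x s n :
  path e x s -> path e (nth x (x :: s) n) (drop n s).
Proof.
have [ns|ns] := leqP n (size s); last by rewrite drop_oversize // ltnW.
by rewrite -{1}(cat_take_drop n s) cat_path last_take // => /andP[].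
Qed.

Lemma last_drop (T : Type) (x : T) s n :
  n <= size s -> last (nth x (x :: s) n) (drop n s) = last x s.
Proof. by move=> ns; rewrite -[in RHS](cat_take_drop n s) last_cat last_take. Qed.

Lemma excursion (T : Type) (a : pred T) x0 s :
  a x0 -> a (last x0 s) -> ~~ all a s ->
  exists s1 x q y s2, [/\ x0 :: s = s1 ++ x :: q ++ y :: s2, a x, a y,
                          q <> [::] & all (predC a) q].
Proof.
elim: s x0 => [|z s IH] x0 ax0 //= alast.
case az: (a z) => /= leaves.
  have [s1 [x [q [y [s2 [-> ax ay q0 qa]]]]]] := IH z az alast leaves.
  by exists (x0 :: s1), x, q, y, s2.
have: has a (z :: s) by apply/(has_nthP z); exists (size s); rewrite // -last_nth.
rewrite /= az => /split_find[y s1 s2 ay s1a].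
exists [::], x0, (z :: s1), y, s2; split => //=; first by rewrite cat_rcons.
by rewrite az all_predC.
Qed.

Section Distance.
Variables (T : finType) (e : rel T).
Hypothesis e_sym : symmetric e.
Hypothesis e_conn : forall x y : T, connect e x y.

Definition walk_of_size n x y :=
  [exists s : n.-tuple T, path e x s && (last x s == y)].

Lemma walk_of_sizeP n x y :
  reflect (exists s, [/\ size s = n, path e x s & last x s = y])
          (walk_of_size n x y).
Proof.
apply: (iffP existsP) => [[s /andP[ps /eqP ls]]|[s [sz ps ls]]].
  by exists s; rewrite size_tuple.
have sz' : size s == n by rewrite sz.
by exists (Tuple sz'); rewrite /= ps ls eqxx.
Qed.

Lemma exists_walk_of_size x y : exists n, walk_of_size n x y.
Proof.
have /connectP[s ps ls] := e_conn x y.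
by exists (size s); apply/walk_of_sizeP; exists s.
Qed.

Definition dist x y := ex_minn (exists_walk_of_size x y).

Lemma shortest_walk x y :
  exists s, [/\ size s = dist x y, path e x s & last x s = y].
Proof. by rewrite /dist; case: ex_minnP => n /walk_of_sizeP. Qed.

Lemma dist_le_size x s : path e x s -> dist x (last x s) <= size s.
Proof.
move=> ps; rewrite /dist; case: ex_minnP => n _; apply.
by apply/walk_of_sizeP; exists s.
Qed.

Lemma is_dist_dist x y : is_dist e x y (dist x y).
Proof. by split=> [|s ps <-]; [exact: shortest_walk | exact: dist_le_size]. Qed.

Lemma is_dist_eq x y n : is_dist e x y n -> n = dist x y.
Proof.
case=> [[s [<- ps <-]] min_n]; apply/eqP; rewrite eqn_leq dist_le_size // andbT.
by have [s' [<- ps' ls']] := shortest_walk x (last x s); exact: min_n ps' ls'.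
Qed.

Lemma distxx x : dist x x = 0.
Proof. by apply/eqP; rewrite -leqn0; exact: (dist_le_size (s := [::])). Qed.

Lemma dist_eq0 x y : dist x y = 0 -> x = y.
Proof. by have [s [<- _ <-]] := shortest_walk x y => /size0nil ->. Qed.

Lemma dist_triangle x y z : dist x z <= dist x y + dist y z.
Proof.
have [s1 [<- p1 l1]] := shortest_walk x y.
have [s2 [<- p2 <-]] := shortest_walk y z.
by rewrite -size_cat -l1 -last_cat dist_le_size // cat_path p1 l1 p2.
Qed.

Lemma dist_adjr x y z : e y z -> dist x z <= (dist x y).+1.
Proof.
move=> eyz; have [s [<- ps ls]] := shortest_walk x y.
by rewrite -(last_rcons x s z) -(size_rcons s z) dist_le_size // rcons_path ps ls.
Qed.

Lemma dist_sym_le x y : dist y x <= dist x y.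
Proof.
have [s [<- ps <-]] := shortest_walk x y.
have rev_end : last (last x s) (rev (belast x s)) = x.
  by case: s {ps} => //= z s; rewrite rev_cons last_rcons.
rewrite -(size_belast x) -size_rev -{2}rev_end dist_le_size // rev_path.
by rewrite (@eq_path _ _ e) // => u v; rewrite /= e_sym.
Qed.

Lemma distC x y : dist x y = dist y x.
Proof. by apply/eqP; rewrite eqn_leq !dist_sym_le. Qed.

Lemma dist_adjl x y z : e x y -> dist x z <= (dist y z).+1.
Proof. by move=> exy; rewrite distC (distC y) dist_adjr // e_sym. Qed.

Lemma walk_dist_le x s p q : path e x s -> p <= q <= size s ->
  dist (nth x (x :: s) p) (nth x (x :: s) q) <= q - p.
Proof.
move=> ps; elim: q => [|q IH]; first by rewrite leqn0 => /andP[/eqP-> _]; rewrite distxx.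
case/andP; rewrite leq_eqVlt => /orP[/eqP<-|pq] qs; first by rewrite distxx.
have := dist_adjr (nth x (x :: s) p) ((pathP x ps) q qs).
have : dist (nth x (x :: s) p) (nth x (x :: s) q) <= q - p by apply: IH; lia.
rewrite [nth x (x :: s) q.+1]/=; lia.
Qed.

Lemma geodesic_dist x s p q : path e x s -> dist x (last x s) = size s ->
  p <= q <= size s -> dist (nth x (x :: s) p) (nth x (x :: s) q) = q - p.
Proof.
move=> ps ds /andP[pq qs]; apply/eqP; rewrite eqn_leq walk_dist_le ?pq //=.
have := walk_dist_le (p := 0) (q := p) ps; rewrite leq0n (leq_trans pq qs) => /(_ isT).
have := walk_dist_le (p := q) (q := size s) ps; rewrite qs leqnn -last_nth => /(_ isT).
have := dist_triangle x (nth x (x :: s) p) (last x s).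
have := dist_triangle (nth x (x :: s) p) (nth x (x :: s) q) (last x s).
rewrite /= ds; lia.
Qed.

Lemma geodesic_isometric x s : path e x s -> dist x (last x s) = size s ->
  isometric_path e (x :: s).
Proof.
move=> ps ds; have dS := geodesic_dist ps ds.
have uS : uniq (x :: s).
  apply/(uniqP x) => i j; rewrite !inE /= !ltnS => hi hj eq_ij.
  case: (ltngtP i j) => // ij; [have := dS i j | have := dS j i];
    by rewrite eq_ij distxx ?hi ?hj (ltnW ij) => /(_ isT); lia.
split=> // x0 i j; rewrite /= !ltnS => hi hj.
rewrite !(set_nth_default x x0) ?ltnS //; case: leqP => ij.
  by rewrite -dS ?ij ?hj //; exact: is_dist_dist.
by rewrite -dS ?(ltnW ij) ?hi // distC; exact: is_dist_dist.
Qed.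

Lemma isometric_path_dist x0 P i j : isometric_path e P -> i <= j < size P ->
  dist (nth x0 P i) (nth x0 P j) = j - i.
Proof.
case=> _ _ _ /(_ x0 i j) Pd /andP[ij jP]; apply/esym/is_dist_eq.
by move: Pd; rewrite ij jP (leq_ltn_trans ij jP); apply.
Qed.

End Distance.

Definition approach (lo hi c : nat) :=
  if c < lo then c.+1 else if hi < c then c.-1 else c.

Lemma approach_cases lo hi c :
  [\/ approach lo hi c = c, approach lo hi c = c.+1 | c = (approach lo hi c).+1].
Proof.
rewrite /approach; case: ltnP => _; first by constructor 2.
by case: ltnP => hc; [constructor 3; lia | constructor 1].
Qed.

Lemma approach_le K lo hi c : c <= K -> lo <= K -> approach lo hi c <= K.
Proof. by rewrite /approach; case: ltnP; case: ltnP; lia. Qed.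

Lemma approach_fixed lo hi c : approach lo hi c = c -> lo <= c <= hi.
Proof. by rewrite /approach; case: ltnP; case: ltnP; lia. Qed.

Lemma approach_stays lo hi lo' hi' c :
  lo <= c <= hi -> lo' <= lo.+1 -> hi <= hi'.+1 -> lo' <= hi' ->
  lo' <= approach lo' hi' c <= hi'.
Proof. by rewrite /approach; case: ltnP; case: ltnP; lia. Qed.

Lemma approach_return lo hi lo' hi' c :
  lo <= hi -> lo' <= hi' -> lo' <= lo.+1 -> lo <= lo'.+1 ->
  hi' <= hi.+1 -> hi <= hi'.+1 ->
  approach lo hi c != c -> approach lo' hi' (approach lo hi c) = c ->
  lo' = c /\ hi' = c.
Proof.
rewrite /approach; case: (ltnP c lo) => [clo|loc]; case: (ltnP hi c) => [hic|chi];
  rewrite ?eqxx //; do 2 case: ltnP; lia.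
Qed.

Lemma bounded_walk_returns K (c : nat -> nat) t0 :
  (forall u, c u <= K) ->
  (forall m, m <= K ->
     c (t0 + m).+1 = (c (t0 + m)).+1 \/ c (t0 + m) = (c (t0 + m).+1).+1) ->
  exists2 m, m < K & c (t0 + m).+2 = c (t0 + m).
Proof.
move=> cK; wlog up : c cK / c t0.+1 = (c t0).+1.
  (* otherwise the reflected walk [K - c] starts upwards *)
  move=> wlog_up steps; have := steps 0 (leq0n K); rewrite addn0 => -[up|down].
    exact: wlog_up cK up steps.
  have [m mK ret] : exists2 m, m < K & K - c (t0 + m).+2 = K - c (t0 + m).
    apply: (wlog_up (fun u => K - c u)) => [u||m /steps] /=.
    - exact: leq_subr.
    - by have := cK t0; lia.
    - by have := cK (t0 + m); have := cK (t0 + m).+1; lia.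
  by exists m => //; move: ret; have := cK (t0 + m); have := cK (t0 + m).+2; lia.
move=> steps.
case: (boolP [exists m : 'I_K, c (t0 + m).+2 == c (t0 + m)]).
  by case/existsP=> m /eqP ret; exists m.
move/existsPn=> no_return.
have climb m : m <= K -> c (t0 + m) = c t0 + m /\ c (t0 + m).+1 = c t0 + m.+1.
  elim: m => [|m IH] mK; first by rewrite !addn0 up addn1.
  have [cm cm1] := IH (ltnW mK); rewrite addnS cm1; split=> //.
  have := steps m.+1 mK; rewrite addnS cm1 => -[->|down]; first lia.
  by have := no_return (Ordinal mK); rewrite /= cm; lia.
by have [_] := climb K (leqnn K); have := cK (t0 + K).+1; lia.
Qed.

Section Histories.
Variables (T : finType) (k : nat) (s : cop_strategy T k) (r : nat -> T).

Lemma last_history x t : last x (history s r t) = (cop_pos s r t, r t).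
Proof. by rewrite /cop_pos; case: t => [|t] //=; rewrite !last_rcons. Qed.

Lemma cop_posS t : cop_pos s r t.+1 = cs_move s (history s r t).
Proof. by rewrite {1}/cop_pos /= last_rcons. Qed.

End Histories.

Section BypathFreePath.
Variables (T : finType) (e : rel T).
Hypotheses (e_sym : symmetric e) (e_conn : forall x y : T, connect e x y).
Variables (p0 : T) (P' : seq T).
Local Notation P := (p0 :: P').
Local Notation K := (size P').
Local Notation vK := (last p0 P').
Local Notation d := (dist e_conn).
Hypotheses (P_iso : isometric_path e P) (P_bf : bypath_free e P).

Lemma path_edges : path e p0 P'.
Proof. by case: P_iso => _ /(_ p0). Qed.

Lemma path_adj j : j < K -> e (nth p0 P j) (nth p0 P j.+1).
Proof. exact: (pathP p0 path_edges). Qed.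

Lemma dist_on_path i j : i <= j <= K -> d (nth p0 P i) (nth p0 P j) = j - i.
Proof. by move=> ijK; apply: isometric_path_dist. Qed.

Lemma dist_ends : d p0 vK = K.
Proof. by have := @dist_on_path 0 K; rewrite leqnn -last_nth subn0; apply. Qed.

Lemma dist_head_index x : x \in P -> d p0 x = index x P.
Proof.
move=> xP; have jK : index x P <= K by rewrite -ltnS index_mem.
by have := @dist_on_path 0 (index x P); rewrite jK (nth_index p0 xP) subn0; apply.
Qed.

Lemma on_pathE x : x \in P -> x = nth p0 P (d p0 x).
Proof. by move=> xP; rewrite dist_head_index // nth_index. Qed.

Lemma splice_isometric i j q :
  i < j <= K -> size q = j - i.+1 ->
  path e (nth p0 P i) (rcons q (nth p0 P j)) ->
  isometric_path e (take i.+1 P ++ q ++ drop j P).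
Proof.
move=> /andP[ij jK] sq; rewrite rcons_path => /andP[pq qj].
have iK : i <= K by lia.
rewrite (drop_nth p0) ?ltnS //=; apply: (geodesic_isometric e_sym).
  rewrite cat_path take_path ?path_edges //= last_take // cat_path pq /= qj.
  exact: drop_path path_edges.
rewrite !last_cat /= last_drop // dist_ends !size_cat size_takel //= size_drop sq.
lia.
Qed.

Lemma geodesic_on_path W :
  path e p0 W -> size W = K -> last p0 W = vK -> {subset W <= P}.
Proof.
move=> pW sW lW; apply/allP/negPn/negP => leaves.
have dW : d p0 (last p0 W) = size W by rewrite lW sW dist_ends.
have lP : last p0 W \in P by rewrite lW mem_last.
have [s1 [x [q [y [s2 [eqS xP yP q0 qP]]]]]] :=
  excursion (a := fun x : T => x \in P) (mem_head p0 P') lP leaves.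
have sizeS := congr1 size eqS; rewrite /= !size_cat /= size_cat /= sW in sizeS.
have onS p : p <= K -> d p0 (nth p0 (p0 :: W) p) = p.
  by move=> pK; have := geodesic_dist (p := 0) (q := p) pW dW; rewrite sW pK subn0; apply.
have Sx : nth p0 (p0 :: W) (size s1) = x by rewrite eqS nth_cat ltnn subnn.
have Sy : nth p0 (p0 :: W) (size s1 + (size q).+1) = y.
  by rewrite eqS -cat_cons catA nth_cat size_cat /= ltnn subnn.
have xE : x = nth p0 P (size s1) by rewrite (on_pathE xP) -Sx onS //; lia.
have yE : y = nth p0 P (size s1 + (size q).+1).
  by rewrite (on_pathE yP) -Sy onS //; lia.
have [_ _ uS _] := geodesic_isometric e_sym pW dW.
have pxy : path e x (rcons q y).
  have : sorted e (s1 ++ x :: q ++ y :: s2) by rewrite -eqS.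
  by case/cat_sorted2 => _ /=; rewrite -cat_rcons cat_path => /andP[].
apply: P_bf; exists (size s1), (size s1 + (size q).+1), x, y, q; split.
- lia.
- by rewrite xE onthE (nth_map p0) //=; lia.
- by rewrite yE onthE (nth_map p0) //=; lia.
- exact/eqP.
split=> //.
- rewrite eqS in uS; apply: infix_uniq uS.
  exact/infix_catl/(infix_catl [:: x])/prefix_infix.
apply: splice_isometric; [lia | lia | by rewrite -xE -yE].
Qed.

Lemma dist_sum_on_path x : d p0 x + d x vK = K -> x \in P.
Proof.
move=> dx; have [s1 [l1 p1 e1]] := shortest_walk e_conn p0 x.
have [s2 [l2 p2 e2]] := shortest_walk e_conn x vK.
have sub : {subset s1 ++ s2 <= P}.
  apply: geodesic_on_path; first by rewrite cat_path p1 e1.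
    by rewrite size_cat l1 l2.
  by rewrite last_cat e1.
have := mem_last p0 s1; rewrite e1 in_cons => /orP[/eqP-> | xs1]; first exact: mem_head.
by apply: sub; rewrite mem_cat xs1.
Qed.

Definition shadow_lo x := K - d x vK.
Definition shadow_hi x := d p0 x.

Lemma shadow_lo_le_hi x : shadow_lo x <= shadow_hi x.
Proof. by have := dist_triangle e_conn p0 x vK; rewrite dist_ends /shadow_lo /shadow_hi; lia. Qed.

Lemma shadow_lo_le x : shadow_lo x <= K.
Proof. exact: leq_subr. Qed.

Lemma shadow_adj x y : e x y ->
  shadow_lo y <= (shadow_lo x).+1 /\ shadow_hi y <= (shadow_hi x).+1.
Proof.
move=> exy; have := dist_adjl e_sym e_conn vK exy; have := dist_adjr e_conn p0 exy.
by rewrite /shadow_lo /shadow_hi; lia.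
Qed.

Lemma shadow_on_path x : x \in P -> shadow_lo x = shadow_hi x.
Proof.
move=> xP; have jK : index x P <= K by rewrite -ltnS index_mem.
have := @dist_on_path (index x P) K; rewrite jK leqnn (nth_index p0 xP) -last_nth.
by move=> /(_ isT) dxK; rewrite /shadow_lo /shadow_hi dxK dist_head_index //; lia.
Qed.

Lemma shadow_pinned x : shadow_lo x = shadow_hi x -> x = nth p0 P (shadow_hi x).
Proof.
rewrite /shadow_lo /shadow_hi => pin; apply: on_pathE.
case: (leqP (d x vK) K) => xK; first by apply: dist_sum_on_path; lia.
(* here [shadow_lo x = 0] by truncated subtraction *)
suff -> : x = p0 by exact: mem_head.
by apply/esym/(dist_eq0 (e_conn := e_conn)); lia.
Qed.

Definition shadow_chase : cop_strategy T 1 :=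
  CopStrategy [ffun _ => p0] (fun h =>
    let: (cops, x) := last ([ffun _ => p0], p0) h in
    [ffun _ => nth p0 P (approach (shadow_lo x) (shadow_hi x) (index (cops ord0) P))]).

Section Chase.
Variable r : nat -> T.

Fixpoint chase_index t :=
  if t is t'.+1 then approach (shadow_lo (r t')) (shadow_hi (r t')) (chase_index t')
  else 0.

Local Notation c := chase_index.

Lemma chase_index_le t : c t <= K.
Proof. by elim: t => //= t IH; apply: approach_le IH (shadow_lo_le _). Qed.

Lemma cop_pos_chase t i : cop_pos shadow_chase r t i = nth p0 P (c t).
Proof.
elim: t i => [|t IH] i; first by rewrite /cop_pos /= ffunE.
have -> : cop_pos shadow_chase r t.+1 = [ffun _ => nth p0 P
    (approach (shadow_lo (r t)) (shadow_hi (r t)) (index (cop_pos shadow_chase r t ord0) P))].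
  by rewrite cop_posS /= last_history.
rewrite ffunE IH index_uniq ?ltnS ?chase_index_le //.
by case: P_iso.
Qed.

Lemma chase_moves t : [\/ c t.+1 = c t, c t.+1 = (c t).+1 | c t = (c t.+1).+1].
Proof. exact: approach_cases. Qed.

Lemma caught_pinned u :
  shadow_lo (r u) = shadow_hi (r u) -> c u.+1 = shadow_hi (r u) ->
  caught shadow_chase r u.+1.
Proof.
move=> pin cu; exists ord0; right; split=> //.
by rewrite cop_pos_chase cu -shadow_pinned.
Qed.

Hypothesis r_walk : robber_walk e r.

Lemma shadow_step t :
  [/\ shadow_lo (r t.+1) <= (shadow_lo (r t)).+1,
      shadow_lo (r t) <= (shadow_lo (r t.+1)).+1,
      shadow_hi (r t.+1) <= (shadow_hi (r t)).+1 &
      shadow_hi (r t) <= (shadow_hi (r t.+1)).+1].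
Proof.
case: (r_walk t) => [->|adj]; first by split; apply: leqnSn.
have [lo1 hi1] := shadow_adj adj.
rewrite e_sym in adj; have [lo2 hi2] := shadow_adj adj.
by split.
Qed.

Lemma chase_tracks u n :
  shadow_lo (r u) <= c u.+1 <= shadow_hi (r u) ->
  shadow_lo (r (u + n)) <= c (u + n).+1 <= shadow_hi (r (u + n)).
Proof.
move=> inside; elim: n => [|n IH]; first by rewrite addn0.
rewrite addnS; have [lo_step _ _ hi_step] := shadow_step (u + n).
exact: approach_stays IH lo_step hi_step (shadow_lo_le_hi _).
Qed.

Lemma chase_pauses t0 : free shadow_chase r (t0 + K.+1) ->
  exists2 u, t0 <= u < t0 + K.+1 & c u.+1 = c u.
Proof.
move=> no_capture.
case: (boolP [exists m : 'I_K.+1, c (t0 + m).+1 == c (t0 + m)]).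
  case/existsP=> m /eqP pause; exists (t0 + m) => //.
  by rewrite leq_addr ltn_add2l ltn_ord.
move/existsPn=> moving.
have steps m : m <= K ->
    c (t0 + m).+1 = (c (t0 + m)).+1 \/ c (t0 + m) = (c (t0 + m).+1).+1.
  move=> mK; have := moving (Ordinal (mK : m < K.+1)).
  by case: (chase_moves (t0 + m)) => [->|->|->]; rewrite ?eqxx; auto.
have [m mK ret] := bounded_walk_returns chase_index_le steps.
exfalso; apply: (no_capture (t0 + m).+2); first lia.
have [lo_st lo_st' hi_st hi_st'] := shadow_step (t0 + m).
have [lo_pin hi_pin] := approach_return (shadow_lo_le_hi _) (shadow_lo_le_hi _)
  lo_st lo_st' hi_st hi_st' (moving (Ordinal (ltnW mK : m < K.+1))) ret.
by apply: caught_pinned; rewrite ?ret ?lo_pin ?hi_pin.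
Qed.

End Chase.

Lemma shadow_chase_guards : guarding_strategy e [set x | x \in P] shadow_chase.
Proof.
move=> r r_walk; split.
  move=> t _ i; rewrite !cop_pos_chase.
  have := chase_index_le r t; have := chase_index_le r t.+1.
  case: (chase_moves r t) => [->|->|->] cK1 cK0; first by left.
    by right; apply: path_adj.
  by right; rewrite e_sym; apply: path_adj.
exists K.+1 => t Kt no_capture; split=> [i|].
  by rewrite inE cop_pos_chase mem_nth // ltnS chase_index_le.
rewrite inE => rP; exists ord0.
have [u /andP[_ uK] pause] :=
  chase_pauses r_walk (t0 := 0) (fun v vK => no_capture v (leq_trans vK Kt)).
have inside : shadow_lo (r u) <= chase_index r u.+1 <= shadow_hi (r u).
  by rewrite pause; exact: approach_fixed pause.
have := chase_tracks r_walk (t - u) inside; rewrite subnKC; last lia.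
rewrite cop_pos_chase (shadow_on_path rP) -eqn_leq => /eqP <-.
exact/esym/on_pathE.
Qed.

Lemma shadow_chase_leisurely r : robber_walk e r ->
  forall t0, free shadow_chase r (t0 + K.+1) ->
  exists u, t0 <= u < t0 + K.+1 /\
    exists i, cop_pos shadow_chase r u.+1 i = cop_pos shadow_chase r u i.
Proof.
move=> r_walk t0 /(chase_pauses r_walk) [u window pause].
by exists u; split=> //; exists ord0; rewrite !cop_pos_chase pause.
Qed.

End BypathFreePath.

Theorem lemma4p1 (T : finType) (e : rel T)
    (e_sym : symmetric e) (e_irr : irreflexive e)
    (G_conn : forall x y : T, connect e x y)
    (P : seq T) (P_iso : isometric_path e P) (P_bf : bypath_free e P) :
  leisurely_guardable e 1 [set x | x \in P].
Proof.
case: P P_iso P_bf => [[]//|p0 P'] P_iso P_bf.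
exists (shadow_chase G_conn p0 P'), (size P').+1; split.
  exact: shadow_chase_guards.
exact: shadow_chase_leisurely.
Qed.
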